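(* Let $n \in\mathbb N$ and $F\colon\mathbb R_+^n \to \mathbb R_+$. If $F$ is amenable and there exists $c>0$ such that $F(\mathbf a)\in [c,2c]$ for all $\mathbf a \in\mathbb R_+^n \setminus \{(0,\dots,0)\}$, then $F\in P_{BM}^n$.
   Context: $\mathbb R_+=[0,\infty)$. $F$ is amenable if $F(\mathbf x)=0\iff\mathbf x=(0,\dots,0)$. A b-metric on $X$ is $d\colon X^2\to\mathbb R_+$ with $d(x,y)=0\iff x=y$, $d(x,y)=d(y,x)$, and for some $K\geqslant1$, $d(x,z)\leqslant K(d(x,y)+d(y,z))$ for all $x,y,z$; a metric is a b-metric with $K=1$. $P^n_{BM}$ is the set of $F\colon\mathbb R_+^n\to\mathbb R_+$ such that for every collection of b-metric spaces $(X_i,d_i)$, $i=1,\dots,n$ (arbitrary constants), the function $D(\mathbf x,\mathbf y)=F(d_1(x_1,y_1),\dots,d_n(x_n,y_n))$ on $\prod_{i=1}^nX_i$ is a metric. *)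

From mathcomp Require Import ssreflect ssrbool eqtype ssrnat fintype.
From Stdlib Require Import Reals.
Set Implicit Arguments.
Unset Strict Implicit.
Open Scope R_scope.

(* R_+^n is modelled as functions 'I_n -> R with all coordinates >= 0. *)
Definition nonneg_vec (n : nat) (a : 'I_n -> R) : Prop := forall i, 0 <= a i.

(* F : R_+^n -> R_+ : F maps nonnegative vectors to nonnegative reals
   (values of F outside R_+^n are irrelevant). *)
Definition maps_to_Rplus (n : nat) (F : ('I_n -> R) -> R) : Prop :=
  forall a : 'I_n -> R, nonneg_vec a -> 0 <= F a.

Definition amenable (n : nat) (F : ('I_n -> R) -> R) : Prop :=
  forall a : 'I_n -> R, nonneg_vec a -> (F a = 0 <-> forall i, a i = 0).

Definition is_bmetric (X : Type) (d : X -> X -> R) : Prop :=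
  (forall x y, 0 <= d x y) /\
  (forall x y, d x y = 0 <-> x = y) /\
  (forall x y, d x y = d y x) /\
  (exists K, 1 <= K /\ forall x y z, d x z <= K * (d x y + d y z)).

Definition is_metric (X : Type) (d : X -> X -> R) : Prop :=
  (forall x y, 0 <= d x y) /\
  (forall x y, d x y = 0 <-> x = y) /\
  (forall x y, d x y = d y x) /\
  (forall x y z, d x z <= d x y + d y z).

Definition P_BM (n : nat) (F : ('I_n -> R) -> R) : Prop :=
  forall (X : 'I_n -> Type) (d : forall i, X i -> X i -> R),
    (forall i, is_bmetric (d i)) ->
    is_metric (fun (x y : forall i, X i) => F (fun i => d i (x i) (y i))).

(** Positivity and symmetry of D := F(d_1, ..., d_n) are inherited from the
    factors, and the triangle inequality holds for any distance with values in
    [c, 2c] off the diagonal: it is trivial when two of the three points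
    coincide, and otherwise D(x,z) <= 2c <= D(x,y) + D(y,z). *)

From mathcomp Require Import ssreflect ssrbool eqtype ssrnat fintype.
From Stdlib Require Import Reals Lra Classical FunctionalExtensionality.
Open Scope R_scope.

Lemma metric_of_pinched (X : Type) (D : X -> X -> R) (c : R) :
  (forall x y, 0 <= D x y) ->
  (forall x y, D x y = 0 <-> x = y) ->
  (forall x y, D x y = D y x) ->
  (forall x y, x <> y -> c <= D x y <= 2 * c) ->
  is_metric D.
Proof.
move=> D_ge0 D_eq0 D_sym D_pinched; split; [done | split; [done | split; [done |]]].
move=> x y z.
have D_xx u : D u u = 0 by apply/D_eq0.
case: (classic (x = y)) => [<- | xy]; first by rewrite D_xx; lra.
case: (classic (y = z)) => [<- | yz]; first by rewrite D_xx; lra.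
case: (classic (x = z)) => [<- | xz].
  by rewrite D_xx; have := D_ge0 x y; have := D_ge0 y x; lra.
by have := D_pinched _ _ xy; have := D_pinched _ _ yz; have := D_pinched _ _ xz; lra.
Qed.

Section DistanceVector.

Context {n : nat} {X : 'I_n -> Type} (d : forall i, X i -> X i -> R).
Hypothesis d_bmetric : forall i, is_bmetric (d i).

Definition dist_vec (x y : forall i, X i) : 'I_n -> R := fun i => d i (x i) (y i).

Lemma dist_vec_nonneg x y : nonneg_vec (dist_vec x y).
Proof. by move=> i; case: (d_bmetric i) => d_ge0 _; apply: d_ge0. Qed.

Lemma dist_vec_eq0 x y : (forall i, dist_vec x y i = 0) <-> x = y.
Proof.
split=> [xy | <- i].
- apply: functional_extensionality_dep => i.
  by case: (d_bmetric i) => _ [d_eq0 _]; apply/d_eq0/xy.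
- by case: (d_bmetric i) => _ [d_eq0 _]; apply/d_eq0.
Qed.

Lemma dist_vecC x y : dist_vec x y = dist_vec y x.
Proof.
apply: functional_extensionality => i.
by case: (d_bmetric i) => _ [_ [d_sym _]]; apply: d_sym.
Qed.

End DistanceVector.

Theorem corollary3p2 (n : nat) (F : ('I_n -> R) -> R) :
  maps_to_Rplus F ->
  amenable F ->
  (exists c, 0 < c /\
     forall a : 'I_n -> R, nonneg_vec a -> ~ (forall i, a i = 0) ->
       c <= F a <= 2 * c) ->
  P_BM F.
Proof.
move=> F_ge0 F_amenable [c [_ F_pinched]] X d d_bmetric.
have dist_nonneg := dist_vec_nonneg d d_bmetric.
have F_eq0 x y : F (dist_vec d x y) = 0 <-> x = y.
  by rewrite (F_amenable _ (dist_nonneg x y)); exact: dist_vec_eq0.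
apply: (@metric_of_pinched _ _ c) => [x y | // | x y | x y xy].
- exact/F_ge0/dist_nonneg.
- exact: (f_equal F (dist_vecC d d_bmetric x y)).
- apply: F_pinched; first exact: dist_nonneg.
  by move/(dist_vec_eq0 d d_bmetric).
Qed.
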